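(* In the setting described in the context, define $$\mathcal{H}=(\mathcal{Q}+Q)^{\theta}_{(0)}-(\mathcal{P}+P)^{\theta}_{(0)}-pnl.$$ Then $\mathrm{HVA}=va(\mathcal{H}+K^{\theta})$, where $K$ is the drift of $\mathcal{Q}+Q$.
   Context: Let $(\Omega,\mathcal{A},\mathbb{Q})$ be a probability space with a filtration $\mathfrak{F}=(\mathfrak{F}_t)_{0\le t\le T}$ satisfying the usual conditions; $\mathbb{E}_t$ is conditional expectation given $\mathfrak{F}_t$. All processes are adapted, càdlàg, and integrable enough for the conditional expectations below to exist. For an integrable adapted process $X$, $va(X)_t=\mathbb{E}_t[X_T-X_t]$. A cash flow is an optional integrable process $\mathcal{Y}$ with $\mathcal{Y}_0=0$; its fair callable value is $\widetilde{va}(\mathcal{Y})_t=\sup_{\tau\in\mathcal{T}^t}\mathbb{E}_t[\mathcal{Y}_\tau-\mathcal{Y}_t]$, where $\mathcal{T}^t$ is the set of $[t,T]$-valued stopping times. Notation: $X_{(0)}=X-X_0$; $X^\theta$ is $X$ stopped at $\theta$. Data: a cash flow $\mathcal{Q}$ with fair callable value $Q=\widetilde{va}(\mathcal{Q})$; $K$ is the drift of the supermartingale $\mathcal{Q}+Q$, i.e. the unique nondecreasing integrable predictable process with $K_0=0$ such that $\mathcal{Q}+Q+K$ is a martingale on $[0,T]$; a cash flow $\mathcal{P}$ with fair value $P=va(\mathcal{P})$; semimartingales $q,p$ with $q_T=0$; stopping times $\tau_s,\theta$ with values in $[0,T]$; a martingale $h$ with $h=h^\theta$. Set $J^s=\mathbf{1}_{[0,\tau_s)}$,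 $J^e=\mathbf{1}_{[0,\theta)}$ and $$pnl=(\mathcal{Q}+J^sq+(1-J^s)Q)^{\theta}_{(0)}-(\mathcal{P}+J^sp+(1-J^s)P)^{\theta}_{(0)}-h-(1-J^e)\big(J^s_\theta q_\theta+(1-J^s_\theta)Q_\theta\big),$$ and $\mathrm{HVA}=-va(pnl)$. *)

From HB Require Import structures.
From mathcomp Require Import all_boot all_order all_algebra.
From mathcomp Require Import all_classical all_reals all_analysis.
Set Implicit Arguments. Unset Strict Implicit. Unset Printing Implicit Defensive.
Import Order.TTheory GRing.Theory Num.Theory.
Import numFieldNormedType.Exports.
Local Open Scope classical_set_scope.
Local Open Scope ring_scope.

Section defs.
Context {R : realType} {d : measure_display} {Om : measurableType d}.

Definition process := R -> Om -> R.

Definition measurable_wrt (G : set (set Om)) (f : Om -> R) :=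
  forall B : set R, measurable B -> G (f @^-1` B).

Definition filtration (T : R) (F : R -> set (set Om)) :=
  [/\ forall t, 0 <= t <= T -> sigma_algebra setT (F t),
      forall t A, 0 <= t <= T -> F t A -> measurable A &
      forall s t, 0 <= s -> s <= t -> t <= T -> F s `<=` F t].

Definition usual_conditions (P : probability Om R) (T : R)
    (F : R -> set (set Om)) :=
  (forall t, 0 <= t < T -> F t = \bigcap_(s in [set s | t < s <= T]) F s) /\
  (forall N, P.-negligible N -> F 0 N).

Variables (P : probability Om R) (T : R) (F : R -> set (set Om)).

Definition adapted (X : process) :=
  forall t, 0 <= t <= T -> measurable_wrt (F t) (X t).

Definition cadlag (X : process) :=
  forall w,
    (forall t, 0 <= t < T -> (fun s => X s w) @ t^'+ --> X t w) /\
    (forall t, 0 < t <= T -> exists l : R, (fun s => X s w) @ t^'- --> l).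

Definition stopping_time (tau : Om -> R) :=
  (forall w, 0 <= tau w <= T) /\
  (forall t, 0 <= t <= T -> F t [set w | tau w <= t]).

Definition stopped_value (X : process) (tau : Om -> R) : Om -> R :=
  fun w => X (tau w) w.

Definition stop (X : process) (theta : Om -> R) : process :=
  fun t w => X (Num.min t (theta w)) w.

Definition shift0 (X : process) : process := fun t w => X t w - X 0 w.

Definition rv_integrable (f : Om -> R) := P.-integrable setT (EFin \o f).

Definition cond_exp_version (G : set (set Om)) (X Y : Om -> R) :=
  [/\ measurable_wrt G Y, rv_integrable Y &
      forall A, G A ->
        (\int[P]_(w in A) (Y w)%:E = \int[P]_(w in A) (X w)%:E)%E].

Definition good_process (X : process) :=
  [/\ adapted X, cadlag X &
      forall tau, stopping_time tau -> rv_integrable (stopped_value X tau)].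

Definition martingale (X : process) :=
  [/\ adapted X, (forall t, 0 <= t <= T -> rv_integrable (X t)) &
      forall s t, 0 <= s -> s <= t -> t <= T ->
        cond_exp_version (F s) (X t) (X s)].

Definition local_martingale (M : process) :=
  adapted M /\ cadlag M /\
  exists tau : nat -> Om -> R,
    [/\ forall n, stopping_time (tau n),
        forall n w, tau n w <= tau n.+1 w,
        {ae P, forall w, exists n, tau n w = T} &
        forall n, martingale (stop M (tau n))].

Definition semimartingale (X : process) :=
  exists M A : process,
    [/\ local_martingale M /\ (forall w, M 0 w = 0),
        (adapted A /\ cadlag A), (forall w, A 0 w = 0),
        (forall w, bounded_variation 0 T (fun t => A t w)) &
        forall t w, 0 <= t <= T -> X t w = X 0 w + M t w + A t w].

(* cash flow: optional (implied by adapted + cadlag) integrable, Y_0 = 0 *)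
Definition cash_flow (Y : process) := good_process Y /\ forall w, Y 0 w = 0.

Definition is_va (X V : process) :=
  forall t, 0 <= t <= T -> cond_exp_version (F t) (fun w => X T w - X t w) (V t).

Definition dominates_callable (Y : process) (t : R) (Z : Om -> R) :=
  forall tau, stopping_time tau -> (forall w, t <= tau w) ->
    forall Yv, cond_exp_version (F t) (fun w => Y (tau w) w - Y t w) Yv ->
      {ae P, forall w, Yv w <= Z w}.

(* V = fair callable value of Y: V_t = ess sup_{tau in T^t} E_t[Y_tau - Y_t] *)
Definition is_callable_va (Y V : process) :=
  forall t, 0 <= t <= T ->
    [/\ measurable_fun setT (V t), dominates_callable Y t (V t) &
        forall Z : Om -> R, measurable_fun setT Z -> dominates_callable Y t Z ->
          {ae P, forall w, V t w <= Z w}].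

Definition predictable_rects : set (set (R * Om)) :=
  [set C | (exists s t A, [/\ 0 <= s, s < t, t <= T, F s A &
                             C = [set x : R | s < x <= t] `*` A]) \/
           (exists A, F 0 A /\ C = [set 0] `*` A)].

Definition predictable_sets :=
  <<s [set x : R | 0 <= x <= T] `*` [set: Om], predictable_rects >>.

Definition predictable (X : process) :=
  forall B : set R, measurable B ->
    predictable_sets (([set x : R | 0 <= x <= T] `*` [set: Om]) `&`
                      [set x | B (X x.1 x.2)]).

Definition is_drift (Y V K : process) :=
  [/\ predictable K /\ (adapted K /\ cadlag K), (forall w, K 0 w = 0),
      (forall w s t, 0 <= s -> s <= t -> t <= T -> K s w <= K t w),
      rv_integrable (K T) &
      martingale (fun t w => Y t w + V t w + K t w)].

End defs.

Section pnl.
Context {R : realType} {d : measure_display} {Om : measurableType d}.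

Definition ind_before (tau : Om -> R) : @process R _ Om :=
  fun t w => if t < tau w then 1 else 0.

Definition pnl (cQ Q cP P q p h : @process R _ Om) (taus theta : Om -> R)
  : process :=
  let Js := ind_before taus in
  let Je := ind_before theta in
  fun t w =>
    shift0 (stop (fun s v => cQ s v + Js s v * q s v + (1 - Js s v) * Q s v)
                 theta) t w
  - shift0 (stop (fun s v => cP s v + Js s v * p s v + (1 - Js s v) * P s v)
                 theta) t w
  - h t w
  - (1 - Je t w) * (Js (theta w) w * q (theta w) w
                    + (1 - Js (theta w) w) * Q (theta w) w).

Definition Hproc (cQ Q cP P q p h : @process R _ Om) (taus theta : Om -> R)
  : process :=
  fun t w =>
    shift0 (stop (fun s v => cQ s v + Q s v) theta) t w
  - shift0 (stop (fun s v => cP s v + P s v) theta) t w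
  - pnl cQ Q cP P q p h taus theta t w.

End pnl.

From Pilot Require Import Defs.
From HB Require Import structures.
From mathcomp Require Import all_boot all_order all_algebra.
From mathcomp Require Import all_classical all_reals all_analysis.
From mathcomp Require Import measurable_realfun lebesgue_Rintegral.
From mathcomp Require Import ring lra zify.
Set Implicit Arguments. Unset Strict Implicit. Unset Printing Implicit Defensive.
Import Order.TTheory GRing.Theory Num.Theory.
Import numFieldNormedType.Exports.
Local Open Scope classical_set_scope.
Local Open Scope ring_scope.

(* Unfolding the definitions, the increments of H + K^theta are those of
   M^theta - N^theta - pnl, where M = cQ + Q + K is a martingale because K is the
   drift of cQ + Q, and N = cP + P is a martingale because P = va(cP).  Hence
   va(H + K^theta) = -va(pnl) = HVA as soon as the stopped martingales have
   vanishing conditional increments, which is optional stopping for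
   right-continuous martingales.  It is proved by rounding the stopping time up
   to dyadic grids, applying the discrete optional stopping theorem backwards
   along the grid, and passing to the limit by right-continuity.  Instead of
   uniform integrability, the limit is controlled by the excesses
   E[(X_rho - c)^+], which the grid argument bounds by E[(X_T - c)^+]. *)

Section truncation.
Variable R : realType.
Implicit Types c x y : R.

Definition excess c x := Num.max (x - c) 0.

Definition clamp c x := Num.max (- c) (Num.min x c).

Lemma excess_ge0 c x : 0 <= excess c x.
Proof. by rewrite /excess le_max lexx orbT. Qed.

Lemma excess_le c x : excess c x <= `|x| + `|c|.
Proof.
rewrite /excess ge_max addr_ge0 // andbT.
by rewrite lerD ?ler_norm // -normrN ler_norm.
Qed.

Lemma excess_eq0 c x : `|x| <= c -> excess c x = 0.
Proof. by rewrite ler_norml /excess => /andP[? ?]; apply: max_r; lra. Qed.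

Lemma clamp_id c x : `|x| <= c -> clamp c x = x.
Proof. by rewrite ler_norml /clamp => /andP[? ?]; rewrite min_l // max_r. Qed.

Lemma norm_clamp_le c x : 0 <= c -> `|clamp c x| <= c.
Proof.
move=> c0; rewrite ler_norml /clamp.
by case: (leP x c) => ?; [case: (leP (- c) x)|case: (leP (- c) c)] => ?; lra.
Qed.

Lemma norm_clamp_le_norm c x : 0 <= c -> `|clamp c x| <= `|x|.
Proof.
move=> c0; rewrite ler_norml /clamp.
have := ler_norm x; have := ler_norm (- x); rewrite normrN.
by case: (leP x c) => ?; [case: (leP (- c) x)|case: (leP (- c) c)] => ? ? ?; lra.
Qed.

Lemma clamp_lipschitz c x y : 0 <= c -> `|clamp c x - clamp c y| <= `|x - y|.
Proof.
move=> c0; rewrite ler_norml /clamp.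
have := ler_norm (x - y); have := ler_norm (- (x - y)); rewrite normrN.
case: (leP x c) => ?; [case: (leP (- c) x)|case: (leP (- c) c)] => ?;
  (case: (leP y c) => ?; [case: (leP (- c) y)|case: (leP (- c) c)] => ?);
  move=> ? ?; lra.
Qed.

Lemma clamp_excess_decomp c x : 0 <= c ->
  x = clamp c x + excess c x - excess c (- x).
Proof.
move=> c0; rewrite /clamp /excess.
by case: (leP x c) => ?; repeat (case: leP => ?); lra.
Qed.

End truncation.

Lemma nonexpansive_cvg {R : realType} (g : R -> R) (u : nat -> R) l :
  (forall a b, `|g a - g b| <= `|a - b|) ->
  u @ \oo --> l -> g (u n) @[n --> \oo] --> g l.
Proof.
move=> gl /cvgrPdist_lt ul; apply/cvgrPdist_lt => e e0.
by near=> n; apply: le_lt_trans (gl _ _) _; near: n; exact: ul.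
Unshelve. all: by end_near.
Qed.

Section real_integrals.
Context {R : realType} {d : measure_display} {Om : measurableType d}.
Variable P : probability Om R.
Implicit Types (A : set Om) (f g : Om -> R).

Lemma measurable_rv_integrable f : rv_integrable P f -> measurable_fun setT f.
Proof. by move=> /(measurable_int P) /measurable_EFinP. Qed.

Lemma rv_integrable_cst (c : R) : rv_integrable P (fun => c).
Proof. exact: finite_measure_integrable_cst. Qed.

Lemma rv_integrable_le f g : measurable_fun setT f -> rv_integrable P g ->
  (forall w, `|f w| <= g w) -> rv_integrable P f.
Proof.
move=> mf ig fg; apply: (le_integrable _ _ _ ig) => //; first exact/measurable_EFinP.
by move=> w _ /=; rewrite lee_fin (le_trans (fg w)) // ler_norm.
Qed.

Lemma rv_integrable_excess f c : rv_integrable P f ->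
  rv_integrable P (fun w => excess c (f w)).
Proof.
move=> If; apply: (rv_integrable_le (g := fun w => `|f w| + `|c|)).
- apply: (measurable_maxr (f := fun w => f w - c) (g := fun _ => 0)) => //.
  by apply: measurable_funB => //; exact: measurable_rv_integrable.
- exact: integrableD (integrable_norm If) (rv_integrable_cst _).
- by move=> w; rewrite ger0_norm ?excess_ge0 ?excess_le.
Qed.

Lemma rv_integrable_clamp f c : 0 <= c -> rv_integrable P f ->
  rv_integrable P (fun w => clamp c (f w)).
Proof.
move=> c0 If; apply: (rv_integrable_le (g := fun => c)).
- apply: (measurable_maxr (f := fun => - c)) => //.
  by apply: measurable_minr => //; exact: measurable_rv_integrable.
- exact: rv_integrable_cst.
- by move=> w; exact: norm_clamp_le.
Qed.

Lemma rv_integrableS A f : measurable A -> rv_integrable P f ->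
  P.-integrable A (EFin \o f).
Proof. by move=> mA; apply: integrableS. Qed.

Lemma RintegralN A f : measurable A -> P.-integrable A (EFin \o f) ->
  \int[P]_(w in A) - f w = - \int[P]_(w in A) f w.
Proof.
move=> mA If; rewrite -mulN1r -RintegralZl //.
by apply: eq_Rintegral => w _; rewrite mulN1r.
Qed.

Lemma Rintegral_le_setT A f : measurable A -> rv_integrable P f ->
  (forall w, 0 <= f w) -> \int[P]_(w in A) f w <= \int[P]_w f w.
Proof.
move=> mA If f0.
rewrite -(setUv A) Rintegral_setU ?setUv //; last by rewrite /disj_set setICr.
- by rewrite lerDl Rintegral_ge0.
- exact: measurableC.
Qed.

Lemma Rintegral_dominated_cvg A (fn : nat -> Om -> R) f g : measurable A ->
  (forall n, measurable_fun setT (fn n)) -> (forall w, fn ^~ w @ \oo --> f w) ->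
  rv_integrable P f -> rv_integrable P g -> (forall n w, `|fn n w| <= g w) ->
  \int[P]_(w in A) fn n w @[n --> \oo] --> \int[P]_(w in A) f w.
Proof.
move=> mA mfn cvf If Ig fg; apply: fine_cvg; rewrite fineK; last first.
  exact: integrable_fin_num (rv_integrableS mA If).
apply: (@dominated_cvg _ _ _ P A mA (fun n => EFin \o fn n) _ (EFin \o g)).
- by move=> n; apply/measurable_EFinP; exact: measurable_funS (mfn n).
- by move=> w _; apply/fine_cvgP; split; [exact: nearW | exact: cvf].
- by [].
- exact: rv_integrableS.
- by move=> n w _ /=; rewrite lee_fin.
Qed.

Lemma Rintegral_clamp_excess A f c : measurable A -> 0 <= c ->
  rv_integrable P f ->
  \int[P]_(w in A) f w = \int[P]_(w in A) clamp c (f w)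
    + \int[P]_(w in A) excess c (f w) - \int[P]_(w in A) excess c (- f w).
Proof.
move=> mA c0 If; have IA := rv_integrableS mA.
have Icl := rv_integrable_clamp c0 If; have Iex := rv_integrable_excess c If.
have Iexn := rv_integrable_excess c (integrableN If : rv_integrable P (-%R \o f)).
rewrite -RintegralD ?IA // -RintegralB ?IA //; last exact: integrableD Icl Iex.
by apply: eq_Rintegral => w _; rewrite -clamp_excess_decomp.
Qed.

Lemma Rintegral_clamp_cvg A f : measurable A -> rv_integrable P f ->
  \int[P]_(w in A) clamp m%:R (f w) @[m --> \oo] --> \int[P]_(w in A) f w.
Proof.
move=> mA If.
apply: (Rintegral_dominated_cvg (g := fun w => `|f w|)) => //.
- move=> m; apply: (measurable_maxr (f := fun => - m%:R)) => //.
  by apply: measurable_minr => //; exact: measurable_rv_integrable.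
- move=> w; apply: cvg_near_cst; near=> m.
  by apply: clamp_id; near: m; exact: nbhs_infty_ger.
- exact: integrable_norm.
- by move=> m w; exact: norm_clamp_le_norm.
Unshelve. all: by end_near.
Qed.

Lemma Rintegral_excess_cvg0 f : rv_integrable P f ->
  \int[P]_w excess m%:R (f w) @[m --> \oo] --> 0.
Proof.
move=> If; rewrite [X in _ --> X](_ : _ = \int[P]_w (0 : R)); last first.
  by rewrite Rintegral_cst // mul0r.
apply: (Rintegral_dominated_cvg (g := fun w => `|f w|)) => //.
- move=> m; apply: (measurable_maxr (f := fun w => f w - m%:R) (g := fun => 0)) => //.
  by apply: measurable_funB => //; exact: measurable_rv_integrable.
- move=> w; apply: cvg_near_cst; near=> m.
  by apply: excess_eq0; near: m; exact: nbhs_infty_ger.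
- exact: rv_integrable_cst.
- exact: integrable_norm.
- move=> m w; rewrite ger0_norm ?excess_ge0 // /excess ge_max normr_ge0 andbT.
  by have := ler_norm (f w); have : (0 : R) <= m%:R by []; lra.
Unshelve. all: by end_near.
Qed.

Lemma Rintegral_excess f c : rv_integrable P f ->
  \int[P]_w excess c (f w) = \int[P]_(w in [set w | c < f w]) (f w - c).
Proof.
move=> If; have mB : measurable [set w | c < f w].
  have := measurable_rv_integrable If measurableT (measurable_itv `]c, +oo[).
  by rewrite setTI preimage_itvoy.
rewrite -[in LHS](setUv [set w | c < f w]) Rintegral_setU ?setUv //; last 3 first.
- exact: measurableC.
- exact: rv_integrable_excess.
- by rewrite /disj_set setICr.
rewrite [X in _ + X](_ : _ = \int[P]_(w in ~` [set w | c < f w]) (0 : R)).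
  rewrite Rintegral_cst ?mul0r ?addr0; last exact: measurableC.
  by apply: eq_Rintegral => w; rewrite inE /= => h; rewrite /excess max_l //; lra.
apply: eq_Rintegral => w; rewrite inE /= => /negP; rewrite -leNgt => h.
by rewrite /excess max_r //; lra.
Qed.

Lemma Rintegral_eq0_negligible (B : set Om) f : measurable B -> rv_integrable P f ->
  (forall w, B w -> 0 < f w) -> \int[P]_(w in B) f w = 0 -> P.-negligible B.
Proof.
move=> mB If f_gt0 f0.
have mf : measurable_fun B (EFin \o f).
  exact: measurable_funS (measurable_int P If).
have /(ae_eq_integral_abs P mB mf).1 : (\int[P]_(w in B) `|(f w)%:E| = 0)%E.
  rewrite (eq_integral (fun w => (f w)%:E)); last first.
    by move=> w; rewrite inE => Bw /=; rewrite gtr0_norm // f_gt0.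
  rewrite -(fineK (integrable_fin_num mB (rv_integrableS mB If))).
  by rewrite -/(Rintegral P B f) f0.
apply: negligibleS => w Bw /= /(_ Bw) [] /eqP.
by rewrite gt_eqF // f_gt0.
Qed.

Definition tail_dominated f g := forall c,
  \int[P]_w excess c (f w) <= \int[P]_w excess c (g w) /\
  \int[P]_w excess c (- f w) <= \int[P]_w excess c (- g w).

Lemma tail_dominated_refl f : tail_dominated f f.
Proof. by []. Qed.

Lemma tail_dominated_trans f g h :
  tail_dominated f g -> tail_dominated g h -> tail_dominated f h.
Proof.
move=> fg gh c; have [? ?] := fg c; have [? ?] := gh c.
by split; apply: le_trans; eassumption.
Qed.

Section limit.
Variables (A : set Om) (Yn : nat -> Om -> R) (Y Z : Om -> R).
Hypotheses (mA : measurable A) (IYn : forall n, rv_integrable P (Yn n)).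
Hypotheses (IY : rv_integrable P Y) (IZ : rv_integrable P Z).
Hypothesis Yn_cvg : forall w, Yn ^~ w @ \oo --> Y w.
Hypothesis Yn_Rintegral : forall n,
  \int[P]_(w in A) Yn n w = \int[P]_(w in A) Z w.
Hypothesis Yn_tail : forall n, tail_dominated (Yn n) Z.

Lemma Rintegral_clamp_limit_bounds c : 0 <= c ->
  \int[P]_(w in A) Z w - \int[P]_w excess c (Z w)
    <= \int[P]_(w in A) clamp c (Y w)
    <= \int[P]_(w in A) Z w + \int[P]_w excess c (- Z w).
Proof.
move=> c0.
have cv : \int[P]_(w in A) clamp c (Yn n w) @[n --> \oo]
          --> \int[P]_(w in A) clamp c (Y w).
  apply: (Rintegral_dominated_cvg (g := fun => c)) => //.
  - move=> n; apply: measurable_rv_integrable; exact: rv_integrable_clamp.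
  - move=> w; apply: (nonexpansive_cvg (g := clamp c) _ (@Yn_cvg w)).
    by move=> a b; exact: clamp_lipschitz.
  - exact: rv_integrable_clamp.
  - exact: rv_integrable_cst.
  - by move=> n w; exact: norm_clamp_le.
have step n : \int[P]_(w in A) Z w - \int[P]_w excess c (Z w)
    <= \int[P]_(w in A) clamp c (Yn n w)
    <= \int[P]_(w in A) Z w + \int[P]_w excess c (- Z w).
  have := Rintegral_clamp_excess mA c0 (IYn n); rewrite Yn_Rintegral.
  have INYn : rv_integrable P (fun w => - Yn n w) := integrableN (IYn n).
  have := Rintegral_le_setT mA (rv_integrable_excess c (IYn n))
    (fun w => excess_ge0 c _).
  have := Rintegral_le_setT mA (rv_integrable_excess c INYn)
    (fun w => excess_ge0 c _).
  have := Rintegral_ge0 P (D := A) (fun w _ => excess_ge0 c (Yn n w)).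
  have := Rintegral_ge0 P (D := A) (fun w _ => excess_ge0 c (- Yn n w)).
  have [] := Yn_tail n c; move=> *; apply/andP; split; lra.
apply/andP; split.
- apply: (ler_cvg_to _ cv); first exact: cvg_cst.
  by apply: nearW => n; case/andP: (step n).
- apply: (ler_cvg_to cv); first exact: cvg_cst.
  by apply: nearW => n; case/andP: (step n).
Qed.

Lemma Rintegral_limit_tail_dominated :
  \int[P]_(w in A) Y w = \int[P]_(w in A) Z w.
Proof.
have bnd m := Rintegral_clamp_limit_bounds (ler0n R m).
have INZ : rv_integrable P (fun w => - Z w) := integrableN IZ.
have cvY := Rintegral_clamp_cvg mA IY.
apply/eqP; rewrite eq_le; apply/andP; split.
- have : \int[P]_(w in A) clamp m%:R (Y w) - \int[P]_w excess m%:R (- Z w)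
      @[m --> \oo] --> \int[P]_(w in A) Y w - 0.
    exact: cvgB cvY (Rintegral_excess_cvg0 INZ).
  rewrite subr0 => /ler_cvg_to; apply; first exact: cvg_cst.
  by apply: nearW => m; have /andP[_ ?] := bnd m; lra.
- have : \int[P]_(w in A) clamp m%:R (Y w) + \int[P]_w excess m%:R (Z w)
      @[m --> \oo] --> \int[P]_(w in A) Y w + 0.
    exact: cvgD cvY (Rintegral_excess_cvg0 IZ).
  rewrite addr0 => cvl; apply: (ler_cvg_to _ cvl); first exact: cvg_cst.
  by apply: nearW => m; have /andP[? _] := bnd m; lra.
Qed.

End limit.

End real_integrals.

Section sub_sigma_algebra.
Context {R : realType} {d : measure_display} {Om : measurableType d}.
Variable G : set (set Om).
Hypothesis hG : sigma_algebra setT G.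

Let measurableE := measurable_g_measurableTypeE hG.

Lemma sigma_algebra0 : G set0.
Proof. by rewrite -measurableE; exact: measurable0. Qed.

Lemma sigma_algebraT : G setT.
Proof. by rewrite -measurableE; exact: measurableT. Qed.

Lemma sigma_algebraI A B : G A -> G B -> G (A `&` B).
Proof. by rewrite -measurableE; exact: measurableI. Qed.

Lemma measurable_wrtP (f : Om -> R) : measurable_wrt G f <->
  measurable_fun (setT : set (g_sigma_algebraType G)) f.
Proof.
split => [hf _ B mB|hf B mB]; first by rewrite setTI measurableE; exact: hf.
by have := hf measurableT B mB; rewrite setTI measurableE.
Qed.

Lemma measurable_wrtD (f g : Om -> R) : measurable_wrt G f ->
  measurable_wrt G g -> measurable_wrt G (fun w => f w + g w).
Proof.
move=> /measurable_wrtP hf /measurable_wrtP hg.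
exact/measurable_wrtP/measurable_funD.
Qed.

Lemma measurable_wrtN (f : Om -> R) : measurable_wrt G f ->
  measurable_wrt G (fun w => - f w).
Proof. by move=> /measurable_wrtP hf; apply/measurable_wrtP/measurableT_comp. Qed.

Lemma measurable_wrt_gt (f : Om -> R) c : measurable_wrt G f ->
  G [set w | c < f w].
Proof. by move=> /(_ _ (measurable_itv `]c, +oo[)); rewrite preimage_itvoy. Qed.

Lemma measurable_wrt_lt (f : Om -> R) c : measurable_wrt G f ->
  G [set w | f w < c].
Proof. by move=> /(_ _ (measurable_itv `]-oo, c[)); rewrite preimage_itvNyo. Qed.

End sub_sigma_algebra.

Section filtration.
Context {R : realType} {d : measure_display} {Om : measurableType d}.
Variables (T : R) (F : R -> set (set Om)).
Hypothesis hF : filtration T F.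
Implicit Types (tau : Om -> R) (s : R) (A : set Om).

Lemma filtration_sigma_algebra s : 0 <= s <= T -> sigma_algebra setT (F s).
Proof. by case: hF => h _ _; apply: h. Qed.

Lemma filtration_measurable s A : 0 <= s <= T -> F s A -> measurable A.
Proof. by case: hF => _ h _; apply: h. Qed.

Lemma filtration_mono s u A : 0 <= s -> s <= u -> u <= T -> F s A -> F u A.
Proof. by case: hF => _ _ h s0 su uT; apply: h. Qed.

Lemma stopping_time_le tau r s : stopping_time T F tau -> r <= s ->
  0 <= s <= T -> F s [set w | tau w <= r].
Proof.
move=> [tau_bnd tau_st] rs /andP[s0 sT]; have [r0|r0] := ltP r 0.
  rewrite (_ : [set w | tau w <= r] = set0).
    by apply: sigma_algebra0; apply: filtration_sigma_algebra; rewrite s0.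
  by apply/seteqP; split => w //=; have /andP[? ?] := tau_bnd w; lra.
apply: (@filtration_mono r) => //; apply: tau_st; apply/andP; split => //; lra.
Qed.

Lemma measurable_stopping_time tau : stopping_time T F tau ->
  measurable_fun setT tau.
Proof.
move=> st; have [tau_bnd _] := st.
have T0 : 0 <= T by have /andP[t0 tT] := tau_bnd point; lra.
apply: (measurability _ (RGenOInfty.measurableE R)) => //.
move=> /= _ [_ [a ->] <-]; rewrite preimage_itvoy setTI.
rewrite (_ : [set x | a < tau x] = ~` [set w | tau w <= Num.min a T]).
  apply/measurableC/(@filtration_measurable T); first by rewrite T0 lexx.
  by apply: stopping_time_le; rewrite ?ge_min ?lexx ?orbT ?T0.
apply/seteqP; split => w /=; have /andP[? ?] := tau_bnd w.
  by move=> h; rewrite le_min => /andP[]; lra.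
by rewrite le_min => /negP; rewrite negb_and -!ltNge => /orP[] //; lra.
Qed.

Lemma stopping_time_cst a : 0 <= a <= T -> stopping_time T F (fun => a).
Proof.
move=> ha; split => // s hs; have hG := filtration_sigma_algebra hs.
have [as_|sa] := leP a s.
  by rewrite (_ : [set w | _] = setT); [exact: sigma_algebraT | exact/seteqP].
rewrite (_ : [set w | _] = set0); first exact: sigma_algebra0.
by apply/seteqP; split => w //=; lra.
Qed.

Lemma stopping_time_max tau a : stopping_time T F tau -> 0 <= a <= T ->
  stopping_time T F (fun w => Num.max (tau w) a).
Proof.
move=> st ha; have [tau_bnd _] := st; split.
  move=> w; have /andP[? ?] := tau_bnd w; move: ha => /andP[? ?].
  by apply/andP; split; case: (leP (tau w) a) => ?; lra.
move=> s hs; have [as_|sa] := leP a s.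
  rewrite (_ : [set w | _] = [set w | tau w <= s]); first exact: stopping_time_le.
  by apply/seteqP; split => w /=; rewrite ge_max ?as_ ?andbT.
rewrite (_ : [set w | _] = set0).
  by apply: sigma_algebra0; exact: filtration_sigma_algebra.
by apply/seteqP; split => w //=; rewrite ge_max => /andP[_]; lra.
Qed.

Lemma stopping_time_min tau a : stopping_time T F tau -> 0 <= a <= T ->
  stopping_time T F (fun w => Num.min a (tau w)).
Proof.
move=> st ha; have [tau_bnd _] := st; split.
  move=> w; have /andP[? ?] := tau_bnd w; move: ha => /andP[? ?].
  by apply/andP; split; case: (leP a (tau w)) => ?; lra.
move=> s hs; have [as_|sa] := leP a s.
  rewrite (_ : [set w | _] = setT).
    by apply: sigma_algebraT; exact: filtration_sigma_algebra.
  by apply/seteqP; split => w //= _; rewrite ge_min as_.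
rewrite (_ : [set w | _] = [set w | tau w <= s]); first exact: stopping_time_le.
apply/seteqP; split => w /=; rewrite ge_min; first by case/orP => //; lra.
by move=> ->; rewrite orbT.
Qed.

End filtration.

Section cond_exp_version.
Context {R : realType} {d : measure_display} {Om : measurableType d}.
Variables (P : probability Om R) (G : set (set Om)).
Hypotheses (hG : sigma_algebra setT G) (hGm : G `<=` measurable).
Implicit Types (f X Y : Om -> R) (A : set Om).

Lemma cond_exp_version_Rintegral X Y A : cond_exp_version P G X Y -> G A ->
  \int[P]_(w in A) Y w = \int[P]_(w in A) X w.
Proof. by case=> _ _ e GA; rewrite /Rintegral e. Qed.

Lemma cond_exp_version_of_Rintegral X Y : measurable_wrt G Y ->
  rv_integrable P Y -> rv_integrable P X ->
  (forall A, G A -> \int[P]_(w in A) Y w = \int[P]_(w in A) X w) ->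
  cond_exp_version P G X Y.
Proof.
move=> mY IY IX YX; split=> // A GA; have mA := hGm GA.
rewrite -(fineK (integrable_fin_num mA (rv_integrableS mA IY))).
rewrite -(fineK (integrable_fin_num mA (rv_integrableS mA IX))).
by rewrite -!/(Rintegral _ _ _) YX.
Qed.

Lemma cond_exp_versionN X Y : rv_integrable P X -> cond_exp_version P G X Y ->
  cond_exp_version P G (fun w => - X w) (fun w => - Y w).
Proof.
move=> IX [mY IY eY]; split; [exact: measurable_wrtN | exact: integrableN IY |].
move=> A GA; have mA := hGm GA.
have intN f : rv_integrable P f ->
    (\int[P]_(w in A) (- f w)%:E = - \int[P]_(w in A) (f w)%:E)%E.
  by move=> If; exact: integralN (integrable_add_def mA (rv_integrableS mA If)).
by rewrite !intN // eY.
Qed.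

Lemma ae_eq0_of_Rintegral_eq0 f : measurable_wrt G f -> rv_integrable P f ->
  (forall A, G A -> \int[P]_(w in A) f w = 0) -> {ae P, forall w, f w = 0}.
Proof.
move=> mf If f0.
have Ngt : P.-negligible [set w | 0 < f w].
  have Ggt : G [set w | 0 < f w] by exact: measurable_wrt_gt.
  by apply: (Rintegral_eq0_negligible (f := f)) => //; [exact: hGm | exact: f0].
have Nlt : P.-negligible [set w | f w < 0].
  have Glt : G [set w | f w < 0] by exact: measurable_wrt_lt.
  apply: (Rintegral_eq0_negligible (f := fun w => - f w)) => //.
  - exact: hGm.
  - exact: integrableN If.
  - by move=> w /=; rewrite oppr_gt0.
  - rewrite RintegralN ?f0 ?oppr0 //; first exact: hGm.
    exact: rv_integrableS (hGm Glt) If.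
apply: negligibleS (negligibleU Ngt Nlt) => w /= fw.
by have [|f_gt0|] := ltgtP (f w) 0; [right | left | ].
Qed.

Lemma cond_exp_version_ae_eq X1 X2 Y1 Y2 :
  (forall A, G A -> \int[P]_(w in A) X1 w = \int[P]_(w in A) X2 w) ->
  cond_exp_version P G X1 Y1 -> cond_exp_version P G X2 Y2 ->
  {ae P, forall w, Y1 w = Y2 w}.
Proof.
move=> X12 Y1E Y2E; have [mY1 IY1 _] := Y1E; have [mY2 IY2 _] := Y2E.
have : {ae P, forall w, Y1 w - Y2 w = 0}.
  apply: ae_eq0_of_Rintegral_eq0.
  - by apply: (measurable_wrtD hG mY1); exact: measurable_wrtN.
  - exact: integrableB IY1 IY2.
  - move=> A GA; have mA := hGm GA.
    rewrite RintegralB ?(rv_integrableS mA) //.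
    rewrite (cond_exp_version_Rintegral Y1E) // (cond_exp_version_Rintegral Y2E) //.
    by rewrite X12 // subrr.
by apply: filterS => w /eqP; rewrite subr_eq0 => /eqP.
Qed.

Lemma cond_exp_version_integrable X Y : measurable_fun setT X ->
  cond_exp_version P G X Y -> rv_integrable P X.
Proof.
move=> mX [_ IY /(_ setT (sigma_algebraT hG)) XY].
apply/integrableP; split; first exact/measurable_EFinP.
by rewrite integral_fin_num_abs // -XY integrable_fin_num.
Qed.

End cond_exp_version.

Section patch.
Context {R : realType} {d : measure_display} {Om : measurableType d}.
Variables (P : probability Om R) (G : set (set Om)).
Hypotheses (hG : sigma_algebra setT G) (hGm : G `<=` measurable).
Implicit Types (Xs Xu V : Om -> R) (B : set Om).

Definition patched B Xs Xu V V' := [/\ forall w, B w -> V w = Xs w,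
  forall w, B w -> V' w = Xu w & forall w, ~ B w -> V w = V' w].

Lemma Rintegral_patch B Xs Xu V V' D : cond_exp_version P G Xu Xs -> G B ->
  rv_integrable P V -> rv_integrable P V' -> patched B Xs Xu V V' ->
  measurable D -> G (D `&` B) ->
  \int[P]_(w in D) V w = \int[P]_(w in D) V' w.
Proof.
move=> XsE GB IV IV' [V_on V'_on V_off] mD GDB; have mB := hGm GB.
have splitB f : rv_integrable P f -> \int[P]_(w in D) f w
    = \int[P]_(w in D `&` B) f w + \int[P]_(w in D `&` ~` B) f w.
  move=> If; rewrite -Rintegral_setU.
  - by rewrite -setIUr setUv setIT.
  - exact: measurableI.
  - by apply: measurableI => //; exact: measurableC.
  - by rewrite -setIUr setUv setIT; exact: rv_integrableS.
  - by rewrite /disj_set setIACA setICr setI0.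
rewrite (splitB _ IV) (splitB _ IV'); congr (_ + _).
  rewrite (@eq_Rintegral _ _ _ P _ Xs); last by move=> w; rewrite inE => -[_ /V_on].
  rewrite (cond_exp_version_Rintegral XsE) //.
  by apply: eq_Rintegral => w; rewrite inE => -[_ Bw]; rewrite V'_on.
by apply: eq_Rintegral => w; rewrite inE => -[_ /V_off].
Qed.

Lemma excess_patch_le B Xs Xu V V' c : cond_exp_version P G Xu Xs -> G B ->
  rv_integrable P V -> rv_integrable P V' -> patched B Xs Xu V V' ->
  \int[P]_w excess c (V w) <= \int[P]_w excess c (V' w).
Proof.
move=> XsE GB IV IV' VV'; have [V_on _ _] := VV'; have [mXs _ _] := XsE.
pose Vc := [set w | c < V w].
have mVc : measurable Vc.
  have := measurable_rv_integrable IV measurableT (measurable_itv `]c, +oo[).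
  by rewrite setTI preimage_itvoy.
have GVcB : G (Vc `&` B).
  rewrite (_ : _ `&` _ = B `&` [set w | c < Xs w]).
    by apply: sigma_algebraI => //; exact: measurable_wrt_gt.
  by apply/seteqP; split => w /= [h Bw]; split; rewrite // /Vc /= ?V_on // -V_on.
have Ic := rv_integrable_cst P c.
rewrite Rintegral_excess // RintegralB ?rv_integrableS //.
rewrite (Rintegral_patch XsE GB IV IV' VV') // -RintegralB ?rv_integrableS //.
apply: (@le_trans _ _ (\int[P]_(w in Vc) excess c (V' w))).
  apply: le_Rintegral => //.
  - by apply: rv_integrableS => //; exact: integrableB IV' Ic.
  - by apply: rv_integrableS => //; exact: rv_integrable_excess.
  - by move=> w _; rewrite /excess le_max lexx.
apply: Rintegral_le_setT => //; first exact: rv_integrable_excess.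
by move=> w; exact: excess_ge0.
Qed.

Lemma tail_dominated_patch B Xs Xu V V' : rv_integrable P Xu ->
  cond_exp_version P G Xu Xs -> G B ->
  rv_integrable P V -> rv_integrable P V' -> patched B Xs Xu V V' ->
  tail_dominated P V V'.
Proof.
move=> IXu XsE GB IV IV' VV' c; split.
  exact: excess_patch_le c XsE GB IV IV' VV'.
have [V_on V'_on V_off] := VV'.
apply: (excess_patch_le c (cond_exp_versionN hG hGm IXu XsE) GB).
- exact: integrableN IV.
- exact: integrableN IV'.
- by split => w hw /=; [rewrite V_on | rewrite V'_on | rewrite V_off].
Qed.

End patch.

Section round_up.
Variable R : realType.
Variables (t h : R).
Hypothesis h0 : 0 < h.
Implicit Types x s : R.

Definition round_up x := t + h * (Num.ceil ((x - t) / h))%:~R.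

Let mul_div x : h * ((x - t) / h) = x - t.
Proof. by rewrite mulrCA mulfV ?mulr1 // gt_eqF. Qed.

Lemma round_up_ge x : x <= round_up x.
Proof. by rewrite /round_up -lerBlDl -ler_pdivrMl // mulrC ceil_ge. Qed.

Lemma round_up_lt x : round_up x < x + h.
Proof.
have := ceilB1_lt ((x - t) / h); have := mul_div x.
rewrite /round_up intrB mulr1z; set y := (x - t) / h; set c := (Num.ceil y)%:~R.
move=> e H; have : 0 < h * (y - (c - 1)) by rewrite mulr_gt0 // subr_gt0.
lra.
Qed.

Lemma round_up_le_grid x (N : nat) :
  x <= t + N%:R * h -> round_up x <= t + N%:R * h.
Proof.
move=> xN; have := mul_div x; rewrite /round_up; set y := (x - t) / h => e.
have yN : y <= N%:R.
  by rewrite -(ler_pM2l h0); lra.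
have : (Num.ceil y)%:~R <= N%:R :> R.
  by rewrite -[N%:R]/((N%:Z)%:~R : R) ler_int ceil_le_int.
by rewrite -(ler_pM2l h0); lra.
Qed.

Lemma round_up_grid x (k : nat) :
  t + k%:R * h < round_up x -> t + k.+1%:R * h <= round_up x.
Proof.
rewrite /round_up; set c := Num.ceil _ => H.
have : k.+1%:R <= c%:~R :> R.
  have : k%:R < c%:~R :> R by rewrite -(ltr_pM2l h0); lra.
  rewrite -[k%:R]/((k%:Z)%:~R : R) -[k.+1%:R]/((k.+1%:Z)%:~R : R) ltr_int ler_int.
  by move=> ?; lia.
by rewrite -(ler_pM2l h0); lra.
Qed.

Lemma round_up_leE x s :
  (round_up x <= s) = (x <= t + h * (Num.floor ((s - t) / h))%:~R).
Proof.
have := mul_div s; have := mul_div x; rewrite /round_up.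
set y := (x - t) / h; set z := (s - t) / h => ex es.
have -> : (t + h * (Num.ceil y)%:~R <= s) = ((Num.ceil y)%:~R <= z).
  by rewrite -[in RHS](ler_pM2l h0); apply/idP/idP => ?; lra.
rewrite -floor_ge_int ceil_le_int.
by rewrite -[in LHS](ler_pM2l h0); apply/idP/idP => ?; lra.
Qed.

End round_up.

Lemma round_up_cvg {R : realType} t (h : nat -> R) x : (forall n, 0 < h n) ->
  h n @[n --> \oo] --> 0 -> round_up t (h n) x @[n --> \oo] --> x.
Proof.
move=> h0 h_cvg; apply: (@squeeze_cvgr _ _ _ _ (fun => x) (fun n => x + h n)).
- by apply: nearW => n; rewrite round_up_ge // ltW // round_up_lt.
- exact: cvg_cst.
- by rewrite -[X in _ --> X]addr0; apply: cvgD => //; exact: cvg_cst.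
Qed.

Lemma vanishing_grid_meshes {R : realType} (t T : R) : t < T ->
  exists h : nat -> R, exists N : nat -> nat,
    [/\ forall n, 0 < h n, forall n, t + (N n)%:R * h n = T &
        h n @[n --> \oo] --> 0].
Proof.
move=> tT; exists (fun n => (T - t) * 2^-1 ^+ n), (fun n => 2 ^ n)%N; split.
- by move=> n; rewrite mulr_gt0 ?subr_gt0 // exprn_gt0 // invr_gt0.
- move=> n; rewrite natrX mulrCA -exprMn mulfV ?expr1n ?mulr1 ?pnatr_eq0 //; lra.
- have := @cvg_geometric R (T - t) 2^-1.
  by rewrite ger0_norm ?invr_ge0 ?ler0n // invf_lt1 ?ltr1n //; apply.
Qed.

Lemma cvg_right_continuous {R : realType} (f : R -> R) x (u : nat -> R) :
  f @ x^'+ --> f x -> (forall n, x <= u n) -> u n @[n --> \oo] --> x ->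
  f (u n) @[n --> \oo] --> f x.
Proof.
move=> /cvgrPdist_le fx xu /cvgrPdist_lt ux; apply/cvgrPdist_le => e e0.
have [r /= r0 fr] := fx e e0; near=> n.
have [<-|xun] := eqVneq x (u n); first by rewrite subrr normr0 ltW.
apply: fr; last by rewrite lt_neqAle xun xu.
by rewrite /ball_ /=; near: n; apply: ux.
Unshelve. all: by end_near.
Qed.

Section optional_stopping.
Context {R : realType} {d : measure_display} {Om : measurableType d}.
Variables (P : probability Om R) (T : R) (F : R -> set (set Om)).
Hypothesis hF : filtration T F.

Lemma stopping_time_round_up t h (N : nat) sigma : 0 <= t -> 0 < h ->
  t + N%:R * h = T -> stopping_time T F sigma -> (forall w, t <= sigma w) ->
  stopping_time T F (fun w => round_up t h (sigma w)).
Proof.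
move=> t0 h0 tN st tsigma; have [sigma_bnd _] := st; split.
  move=> w; have /andP[_ sT] := sigma_bnd w; apply/andP; split.
    by rewrite (le_trans t0) // (le_trans (tsigma w)) // round_up_ge.
  by rewrite -tN round_up_le_grid // tN.
move=> s hs; rewrite (_ : [set w | _] = [set w | sigma w <=
    t + h * (Num.floor ((s - t) / h))%:~R]).
  apply: (stopping_time_le hF st) => //.
  have : h * (Num.floor ((s - t) / h))%:~R <= h * ((s - t) / h).
    by rewrite ler_pM2l // floor_le.
  by rewrite mulrCA mulfV ?gt_eqF // mulr1; lra.
by apply/seteqP; split => w /=; rewrite round_up_leE.
Qed.

Variable X : @process R d Om.
Hypotheses (hX : good_process P T F X) (hXm : martingale P T F X).

Let X_integrable tau : stopping_time T F tau ->
  rv_integrable P (fun w => X (tau w) w).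
Proof. by case: hX => _ _; apply. Qed.

Let X_cond_exp s u : 0 <= s -> s <= u -> u <= T ->
  cond_exp_version P (F s) (X u) (X s).
Proof. by case: hXm => _ _; apply. Qed.

Lemma optional_stopping_step rho a b : 0 <= a -> a <= b -> b <= T ->
  stopping_time T F rho -> (forall w, a < rho w -> b <= rho w) ->
  (forall A, F a A -> \int[P]_(w in A) X (Num.max (rho w) a) w
                      = \int[P]_(w in A) X (Num.max (rho w) b) w) /\
  tail_dominated P (fun w => X (Num.max (rho w) a) w)
                   (fun w => X (Num.max (rho w) b) w).
Proof.
move=> a0 ab bT st gap.
have a_bnd : 0 <= a <= T by rewrite a0 (le_trans ab).
have b_bnd : 0 <= b <= T by rewrite bT (le_trans a0).
have hG := filtration_sigma_algebra hF a_bnd.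
have hGm A : F a A -> measurable A := filtration_measurable hF a_bnd.
have IV c : 0 <= c <= T -> rv_integrable P (fun w => X (Num.max (rho w) c) w).
  by move=> c_bnd; apply/X_integrable/(stopping_time_max hF st).
pose B := [set w | rho w <= a].
have GB : F a B by exact: (stopping_time_le hF st).
have XE := X_cond_exp a0 ab bT.
have VV : patched B (X a) (X b) (fun w => X (Num.max (rho w) a) w)
                                (fun w => X (Num.max (rho w) b) w).
  split=> w; rewrite /B /=.
  - by move=> ?; rewrite max_r.
  - by move=> ?; rewrite max_r // (le_trans _ ab).
  - by move=> /negP; rewrite -ltNge => lt_rho; rewrite !max_l // ?gap // ltW.
split; last first.
  apply: (tail_dominated_patch hG hGm _ XE GB (IV _ a_bnd) (IV _ b_bnd) VV).
  by apply: (X_integrable (tau := fun => b)); exact: (stopping_time_cst hF b_bnd).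
move=> A FA; apply: (Rintegral_patch hGm XE GB (IV _ a_bnd) (IV _ b_bnd) VV).
  exact: hGm.
exact: sigma_algebraI.
Qed.

Lemma optional_stopping_grid t h (N : nat) rho : 0 <= t -> 0 < h ->
  t + N%:R * h = T -> stopping_time T F rho -> (forall w, t <= rho w) ->
  (forall k w, t + k%:R * h < rho w -> t + k.+1%:R * h <= rho w) ->
  (forall A, F t A ->
     \int[P]_(w in A) X (rho w) w = \int[P]_(w in A) X T w) /\
  tail_dominated P (fun w => X (rho w) w) (X T).
Proof.
move=> t0 h0 tN st trho grid; have [rho_bnd _] := st.
pose tk (k : nat) := t + k%:R * h.
pose V k w := X (Num.max (rho w) (tk k)) w.
have tk_ge k : t <= tk k by rewrite lerDl mulr_ge0 // ltW.
have tkS k : tk k <= tk k.+1 by rewrite lerD2l ler_pM2r // ler_nat.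
have tk_le k : (k <= N)%N -> tk k <= T.
  by move=> kN; rewrite -tN lerD2l ler_pM2r // ler_nat.
have VN : V N = X T.
  by apply/funext => w; rewrite /V [tk N]tN max_r //; have /andP[] := rho_bnd w.
have V0 : V 0%N = (fun w => X (rho w) w).
  by apply/funext => w; rewrite /V /tk mul0r addr0 max_l.
suff back j : (j <= N)%N ->
    (forall A, F t A -> \int[P]_(w in A) V (N - j)%N w = \int[P]_(w in A) X T w) /\
    tail_dominated P (V (N - j)%N) (X T).
  by rewrite -V0 -(subnn N); exact: back.
elim: j => [_|j IH jN].
  by rewrite subn0 VN; split => //; exact: tail_dominated_refl.
have [IH1 IH2] := IH (ltnW jN); rewrite -subnSK // in IH1 IH2.
have kN : ((N - j.+1).+1 <= N)%N by lia.
have [step1 step2] := optional_stopping_step (le_trans t0 (tk_ge _))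
  (tkS (N - j.+1)%N) (tk_le _ kN) st (grid _).
split; last exact: tail_dominated_trans step2 IH2.
move=> A FtA; rewrite -IH1 // step1 //.
apply: (filtration_mono hF t0 (tk_ge _) (tk_le _ (ltnW kN)) FtA).
Qed.

Lemma optional_stopping_terminal t sigma A : 0 <= t <= T ->
  stopping_time T F sigma -> (forall w, t <= sigma w) -> F t A ->
  \int[P]_(w in A) X (sigma w) w = \int[P]_(w in A) X T w.
Proof.
move=> /andP[t0 tT] st tsigma FtA; have [sigma_bnd _] := st.
have sigmaT w : sigma w <= T by have /andP[] := sigma_bnd w.
have [tTe|tT'] := eqVneq t T.
  by apply: eq_Rintegral => w _; congr X; apply/eqP; rewrite eq_le sigmaT -tTe tsigma.
have {tT tT'} tT : t < T by rewrite lt_neqAle tT' tT.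
have [h [N [h0 grid_end h_cvg]]] := vanishing_grid_meshes tT.
pose rho n w := round_up t (h n) (sigma w).
have rho_st n : stopping_time T F (rho n).
  exact: (stopping_time_round_up t0 (h0 n) (grid_end n) st tsigma).
have rho_cvg w : X (rho n w) w @[n --> \oo] --> X (sigma w) w.
  have sigma_rho n : sigma w <= rho n w := round_up_ge _ (h0 n) _.
  have [sigmaT'|sigmaT'] := ltP (sigma w) T; last first.
    have rhoT n : rho n w = sigma w.
      apply/eqP; rewrite eq_le sigma_rho andbT (le_trans _ sigmaT') //.
      by have [/(_ w) /andP[]] := rho_st n.
    by under eq_fun do rewrite rhoT; exact: cvg_cst.
  apply: (cvg_right_continuous (f := X ^~ w)) => //; last exact: round_up_cvg.
  have [_ /(_ w) [X_rc _] _] := hX; apply: X_rc.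
  by rewrite sigmaT' andbT; have /andP[] := sigma_bnd w.
have t_bnd : 0 <= t <= T by rewrite t0 ltW.
have mA := filtration_measurable hF t_bnd FtA.
have [grid_eq grid_tail] := all_and2 (fun n => optional_stopping_grid t0 (h0 n)
  (grid_end n) (rho_st n) (fun w => le_trans (tsigma w) (round_up_ge _ (h0 n) _))
  (fun k w => @round_up_grid _ t _ (h0 n) (sigma w) k)).
apply: (Rintegral_limit_tail_dominated mA (Yn := fun n w => X (rho n w) w)) => //.
- by move=> n; exact: X_integrable.
- exact: X_integrable.
- apply: (X_integrable (tau := fun => T)); apply: (stopping_time_cst hF).
  by rewrite lexx (le_trans t0) // ltW.
- by move=> n; exact: grid_eq.
Qed.

Theorem optional_stopping t theta A : 0 <= t <= T ->
  stopping_time T F theta -> F t A ->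
  \int[P]_(w in A) stop X theta T w = \int[P]_(w in A) stop X theta t w.
Proof.
rewrite /stop => t_bnd st FtA; have [theta_bnd _] := st; have /andP[t0 tT] := t_bnd.
have mA := filtration_measurable hF t_bnd FtA.
have IA tau : stopping_time T F tau ->
    P.-integrable A (EFin \o (fun w => X (tau w) w)).
  by move=> ?; apply: rv_integrableS => //; exact: X_integrable.
have T_bnd : 0 <= T <= T by rewrite lexx (le_trans t0).
have t_sigma w : t <= Num.max (theta w) t by rewrite le_max lexx orbT.
have terminal := optional_stopping_terminal t_bnd (stopping_time_max hF st t_bnd)
  t_sigma FtA.
have mart := cond_exp_version_Rintegral (X_cond_exp t0 tT (lexx T)) FtA.
have pathwise w : X (Num.min T (theta w)) w - X (Num.min t (theta w)) w
    = X (Num.max (theta w) t) w - X t w.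
  have /andP[_ thetaT] := theta_bnd w; rewrite (@min_r _ _ T) //.
  by case: (leP (theta w) t) => h; rewrite ?subrr // min_r // max_l // ltW.
apply/eqP; rewrite -subr_eq0 -RintegralB ?IA //; last 2 first.
- exact: (stopping_time_min hF st T_bnd).
- exact: (stopping_time_min hF st t_bnd).
rewrite (eq_Rintegral _ (fun w _ => pathwise w)) RintegralB ?IA //.
- by rewrite terminal mart subrr.
- exact: (stopping_time_max hF st t_bnd).
- exact: (stopping_time_cst hF t_bnd).
Qed.

End optional_stopping.

Section processes.
Context {R : realType} {d : measure_display} {Om : measurableType d}.
Variables (QQ : probability Om R) (T : R) (F : R -> set (set Om)).
Hypothesis hF : filtration T F.
Implicit Types X Y : @process R d Om.

Lemma good_processD X Y : good_process QQ T F X -> good_process QQ T F Y ->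
  good_process QQ T F (fun t w => X t w + Y t w).
Proof.
move=> [aX cX iX] [aY cY iY]; split.
- move=> t ht /=; apply: (measurable_wrtD (filtration_sigma_algebra hF ht)).
  + exact: aX.
  + exact: aY.
- move=> w; have [rX lX] := cX w; have [rY lY] := cY w; split.
    by move=> t ht; apply: cvgD; [exact: rX | exact: rY].
  move=> t ht; have [l1 h1] := lX t ht; have [l2 h2] := lY t ht.
  by exists (l1 + l2); apply: cvgD.
- by move=> tau st; exact: integrableD (iX tau st) (iY tau st).
Qed.

Lemma good_process_integrable X t : good_process QQ T F X -> 0 <= t <= T ->
  rv_integrable QQ (X t).
Proof. by move=> [_ _ iX] ht; exact: (iX _ (stopping_time_cst hF ht)). Qed.

Lemma measurable_stopped_value X tau : good_process QQ T F X ->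
  stopping_time T F tau -> measurable_fun setT (fun w => X (tau w) w).
Proof. by move=> [_ _ iX] st; apply: measurable_rv_integrable; exact: iX. Qed.

Lemma va_martingale Y V : good_process QQ T F Y -> good_process QQ T F V ->
  is_va QQ T F Y V -> martingale QQ T F (fun t w => Y t w + V t w).
Proof.
move=> gY gV YV; have [aYV _ _] := good_processD gY gV.
have I X t : good_process QQ T F X -> 0 <= t <= T -> rv_integrable QQ (X t).
  exact: good_process_integrable.
split => // [t ht|s u s0 su uT]; first exact: integrableD (I _ _ gY ht) (I _ _ gV ht).
have s_bnd : 0 <= s <= T by rewrite s0 (le_trans su).
have u_bnd : 0 <= u <= T by rewrite uT (le_trans s0).
apply: cond_exp_version_of_Rintegral.
- by move=> A; exact: (filtration_measurable hF s_bnd).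
- exact: aYV.
- exact: integrableD (I _ _ gY s_bnd) (I _ _ gV s_bnd).
- exact: integrableD (I _ _ gY u_bnd) (I _ _ gV u_bnd).
move=> A FsA; have mA := filtration_measurable hF s_bnd FsA.
have FuA := filtration_mono hF s0 su uT FsA.
have IA X t : good_process QQ T F X -> 0 <= t <= T ->
    QQ.-integrable A (EFin \o X t).
  by move=> gX ht; exact: rv_integrableS mA (I _ _ gX ht).
rewrite !RintegralD ?IA //.
rewrite (cond_exp_version_Rintegral (YV s s_bnd) FsA).
rewrite (cond_exp_version_Rintegral (YV u u_bnd) FuA).
rewrite !RintegralB ?IA //; lra.
Qed.

End processes.

Lemma Hproc_stop_increment {R : realType} {d : measure_display}
    {Om : measurableType d} (cQ Q K cP P q p h : @process R d Om)
    (taus theta : Om -> R) s u w :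
  let M := fun t w => cQ t w + Q t w + K t w in
  let N := fun t w => cP t w + P t w in
  let pl := pnl cQ Q cP P q p h taus theta in
  (Hproc cQ Q cP P q p h taus theta u w + stop K theta u w)
    - (Hproc cQ Q cP P q p h taus theta s w + stop K theta s w)
  = (stop M theta u w - stop M theta s w) - (stop N theta u w - stop N theta s w)
    - (pl u w - pl s w).
Proof. by move=> M N pl; rewrite /M /N /pl /Hproc /Defs.shift0 /stop; ring. Qed.

Section pnl_increment.
Context {R : realType} {d : measure_display} {Om : measurableType d}.
Variables (QQ : probability Om R) (T : R) (F : R -> set (set Om)).
Hypothesis hF : filtration T F.
Variables (cQ Q K cP P q p h : @process R d Om) (taus theta : Om -> R).
Hypotheses (gcQ : good_process QQ T F cQ) (gQ : good_process QQ T F Q).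
Hypotheses (gK : good_process QQ T F K) (hKd : is_drift QQ T F cQ Q K).
Hypotheses (gcP : good_process QQ T F cP) (gP : good_process QQ T F P).
Hypothesis hPva : is_va QQ T F cP P.
Hypotheses (gq : good_process QQ T F q) (gp : good_process QQ T F p).
Hypothesis gh : good_process QQ T F h.
Hypotheses (htaus : stopping_time T F taus) (htheta : stopping_time T F theta).

Local Notation pl := (pnl cQ Q cP P q p h taus theta).

Lemma measurable_pnl u : 0 <= u <= T -> measurable_fun setT (pl u).
Proof.
move=> u_bnd; have T0 : 0 <= T by case/andP: u_bnd => u0 uT; lra.
have st_u := stopping_time_min hF htheta u_bnd.
have st_0 : stopping_time T F (fun w => Num.min 0 (theta w)).
  by apply: (stopping_time_min hF htheta); rewrite lexx T0.
have st_cu := stopping_time_cst hF u_bnd.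
have mtau := measurable_stopping_time hF.
rewrite /pnl /Defs.shift0 /stop /ind_before /=.
repeat first
  [ apply: measurable_funB | apply: measurable_funD | apply: measurable_funM
  | apply: measurable_cst | apply: measurable_fun_ifT | apply: measurable_fun_ltr
  | (apply: measurable_stopped_value; first eassumption; by [])
  | (apply: mtau; by []) ].
Qed.

Lemma integrable_pnl_increment V t : 0 <= t <= T -> is_va QQ T F pl V ->
  rv_integrable QQ (fun w => pl T w - pl t w).
Proof.
move=> t_bnd plV; have /andP[t0 tT] := t_bnd.
have T_bnd : 0 <= T <= T by rewrite lexx (le_trans t0).
have hG := filtration_sigma_algebra hF t_bnd.
apply: (cond_exp_version_integrable hG _ (plV t t_bnd)).
by apply: measurable_funB; exact: measurable_pnl.
Qed.

Lemma Rintegral_Hproc_increment t A : 0 <= t <= T -> F t A ->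
  rv_integrable QQ (fun w => pl T w - pl t w) ->
  \int[QQ]_(w in A) ((Hproc cQ Q cP P q p h taus theta T w + stop K theta T w)
    - (Hproc cQ Q cP P q p h taus theta t w + stop K theta t w))
  = \int[QQ]_(w in A) - (pl T w - pl t w).
Proof.
move=> t_bnd FtA I_dpl; have mA := filtration_measurable hF t_bnd FtA.
have T_bnd : 0 <= T <= T by case/andP: t_bnd => t0 tT; rewrite lexx (le_trans t0).
pose M s w := cQ s w + Q s w + K s w; pose N s w := cP s w + P s w.
have [_ _ _ _ M_mart] := hKd.
have gM : good_process QQ T F M := good_processD hF (good_processD hF gcQ gQ) gK.
have gN : good_process QQ T F N := good_processD hF gcP gP.
have N_mart : martingale QQ T F N := va_martingale hF gcP gP hPva.
have I_stop X u : good_process QQ T F X -> 0 <= u <= T ->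
    rv_integrable QQ (stop X theta u).
  by move=> [_ _ iX] u_bnd; exact/iX/(stopping_time_min hF htheta u_bnd).
have I_incr X : good_process QQ T F X ->
    rv_integrable QQ (fun w => stop X theta T w - stop X theta t w).
  by move=> gX; exact: integrableB (I_stop _ _ gX T_bnd) (I_stop _ _ gX t_bnd).
have incr0 X : good_process QQ T F X -> martingale QQ T F X ->
    \int[QQ]_(w in A) (stop X theta T w - stop X theta t w) = 0.
  move=> gX mX; rewrite RintegralB ?(rv_integrableS mA) ?I_stop //.
  by rewrite (optional_stopping hF gX mX t_bnd htheta FtA) subrr.
have I_MN : rv_integrable QQ (fun w => (stop M theta T w - stop M theta t w)
    - (stop N theta T w - stop N theta t w)).
  exact: integrableB (I_incr _ gM) (I_incr _ gN).
rewrite (eq_Rintegral _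
  (fun w _ => Hproc_stop_increment cQ Q K cP P q p h taus theta t T w)).
rewrite RintegralB ?(rv_integrableS mA) // RintegralB ?(rv_integrableS mA) ?I_incr //.
by rewrite !incr0 // subrr sub0r RintegralN ?(rv_integrableS mA).
Qed.

End pnl_increment.

Theorem lemma3p1 (R : realType) (d : measure_display) (Om : measurableType d)
  (QQ : probability Om R) (T : R) (F : R -> set (set Om))
  (hT : 0 <= T) (hF : filtration T F) (hU : usual_conditions QQ T F)
  (cQ Q K cP P q p h : @process R _ Om) (taus theta : Om -> R)
  (hcQ : cash_flow QQ T F cQ)
  (hQ : good_process QQ T F Q) (hQva : is_callable_va QQ T F cQ Q)
  (hK : good_process QQ T F K) (hKd : is_drift QQ T F cQ Q K)
  (hcP : cash_flow QQ T F cP)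
  (hP : good_process QQ T F P) (hPva : is_va QQ T F cP P)
  (hq : good_process QQ T F q) (hqs : semimartingale QQ T F q)
  (hqT : forall w, q T w = 0)
  (hp : good_process QQ T F p) (hps : semimartingale QQ T F p)
  (htaus : stopping_time T F taus) (htheta : stopping_time T F theta)
  (hh : good_process QQ T F h) (hhm : martingale QQ T F h)
  (hhth : {ae QQ, forall w, forall t, h t w = stop h theta t w}) :
  forall HVA W : process,
    (* HVA = - va(pnl) *)
    is_va QQ T F (pnl cQ Q cP P q p h taus theta) (fun t w => - HVA t w) ->
    (* W = va(H + K^theta) *)
    is_va QQ T F (fun t w => Hproc cQ Q cP P q p h taus theta t w
                             + stop K theta t w) W ->
    forall t, 0 <= t <= T -> {ae QQ, forall w, HVA t w = W t w}.
Proof.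
move=> HVA W hHVA hW t t_bnd; have [gcQ _] := hcQ; have [gcP _] := hcP.
have hG := filtration_sigma_algebra hF t_bnd.
have hGm A : F t A -> measurable A := filtration_measurable hF t_bnd.
have I_dpl :=
  integrable_pnl_increment hF gcQ hQ gcP hP hq hp hh htaus htheta t_bnd hHVA.
apply: (cond_exp_version_ae_eq hG hGm _ _ (hW t t_bnd)) => [A FtA|].
  by rewrite (Rintegral_Hproc_increment hF gcQ hQ hK hKd gcP hP hPva htheta
    t_bnd FtA I_dpl).
have := cond_exp_versionN hG hGm I_dpl (hHVA t t_bnd).
by congr cond_exp_version; apply/funext => w; rewrite opprK.
Qed.
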